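(* Let $K$ be a field and $T$ a ring extension of $K$. If $V$ is a maximal subring of $T$ which is integrally closed in $T$ and $K\not\subseteq V$, then $V\cap K$ is a maximal subring of $K$; in particular, $V\cap K$ is a one-dimensional valuation domain.
   Context: All rings are commutative with $1\neq0$ and subrings are unital. A maximal subring is a proper subring maximal with respect to inclusion among proper subrings. *)

From HB Require Import structures.
From mathcomp Require Import all_boot all_order all_algebra.
Set Implicit Arguments. Unset Strict Implicit. Unset Printing Implicit Defensive.
Import GRing.Theory.
Local Open Scope ring_scope.

Section Defs.
Variable T : comNzRingType.

Definition is_subring (S : T -> Prop) : Prop :=
  [/\ S 1, (forall x y, S x -> S y -> S (x - y)) &
      (forall x y, S x -> S y -> S (x * y))].

Definition subring_of (S U : T -> Prop) : Prop :=
  is_subring S /\ (forall x, S x -> U x).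

Definition proper_in (S U : T -> Prop) : Prop := exists x, U x /\ ~ S x.

Definition maximal_subring_of (S U : T -> Prop) : Prop :=
  [/\ subring_of S U, proper_in S U &
      forall S', subring_of S' U -> proper_in S' U ->
        (forall x, S x -> S' x) -> forall x, S' x -> S x].

Definition is_subfield (K : T -> Prop) : Prop :=
  is_subring K /\ forall x, K x -> x != 0 -> exists2 y, K y & x * y = 1.

Definition integral_over (V : T -> Prop) (x : T) : Prop :=
  exists p : {poly T}, [/\ p \is monic, (forall i, V p`_i) & root p x].

Definition integrally_closed_in_T (V : T -> Prop) : Prop :=
  forall x, integral_over V x -> V x.

Definition inter (A B : T -> Prop) : T -> Prop := fun x => A x /\ B x.

Definition valuation_domain (A : T -> Prop) : Prop :=
  (forall a b, A a -> A b -> a * b = 0 -> a = 0 \/ b = 0) /\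
  (forall a b, A a -> A b ->
     (exists2 c, A c & b = a * c) \/ (exists2 c, A c & a = b * c)).

Definition prime_ideal_of (A P : T -> Prop) : Prop :=
  [/\ (forall x, P x -> A x), P 0,
      (forall x y, P x -> P y -> P (x + y)) &
      (forall a x, A a -> P x -> P (a * x))] /\
  (~ P 1 /\ (forall x y, A x -> A y -> P (x * y) -> P x \/ P y)).

Definition strict_sub (P Q : T -> Prop) : Prop :=
  (forall x, P x -> Q x) /\ exists x, Q x /\ ~ P x.

Definition krull_dim_one (A : T -> Prop) : Prop :=
  (exists P Q, [/\ prime_ideal_of A P, prime_ideal_of A Q & strict_sub P Q]) /\
  ~ (exists P Q R, [/\ prime_ideal_of A P, prime_ideal_of A Q, prime_ideal_of A R,
                      strict_sub P Q & strict_sub Q R]).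
End Defs.

(* Let V be a maximal subring of T, s outside V and s t = 1.  Then V[s] = T, so
   every z is p(s) for a polynomial p over V, and z t^n = r(t) with n = size p
   and r the reversal of p.  For z = t this makes t integral over V, so t is in V:
   V contains s or s^-1 for every unit s of T, hence V ∩ K is a valuation ring of
   K.  For z in K it puts z t^n in V ∩ K, whence K = (V ∩ K)[s] for every s in K
   outside V, which is maximality.  For z = x^-1 with x a nonzero element of a
   prime Q of V ∩ K, and s = y^-1 with y in a prime R ⊋ Q, it gives y^n in Q, so
   y is in Q: chains of primes have length at most one. *)

From HB Require Import structures.
From mathcomp Require Import all_boot all_order all_algebra.
From Stdlib Require Import Classical.
Set Implicit Arguments. Unset Strict Implicit. Unset Printing Implicit Defensive.
Import GRing.Theory.
Local Open Scope ring_scope.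

Section Subring.
Variables (T : comNzRingType) (V : T -> Prop).
Hypothesis subV : is_subring V.

Lemma subring1 : V 1.
Proof. by case: subV. Qed.

Lemma subringB x y : V x -> V y -> V (x - y).
Proof. by case: subV => _ VB _; apply: VB. Qed.

Lemma subringM x y : V x -> V y -> V (x * y).
Proof. by case: subV => _ _ VM; apply: VM. Qed.

Lemma subring0 : V 0.
Proof. by rewrite -(subrr 1); apply: subringB; apply: subring1. Qed.

Lemma subringN x : V x -> V (- x).
Proof. by rewrite -sub0r; apply: subringB; apply: subring0. Qed.

Lemma subringD x y : V x -> V y -> V (x + y).
Proof. by move=> Vx Vy; rewrite -[y]opprK; apply: subringB => //; apply: subringN. Qed.

Lemma subringX x n : V x -> V (x ^+ n).
Proof.
move=> Vx; elim: n => [|n IHn]; first by rewrite expr0; apply: subring1.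
by rewrite exprS; apply: subringM.
Qed.

Lemma subring_bool (b : bool) : V b%:R.
Proof. by case: b; [apply: subring1 | apply: subring0]. Qed.

Lemma subring_sum (I : Type) (r : seq I) (P : pred I) (F : I -> T) :
  (forall i, P i -> V (F i)) -> V (\sum_(i <- r | P i) F i).
Proof. by apply: big_ind; [apply: subring0 | apply: subringD]. Qed.

Definition poly_over (p : {poly T}) : Prop := forall i, V p`_i.

Lemma subring_horner p x : poly_over p -> V x -> V p.[x].
Proof.
move=> Vp Vx; rewrite horner_coef; apply: subring_sum => i _.
by apply: subringM => //; apply: subringX.
Qed.

Definition adjoin (x : T) : T -> Prop :=
  fun y => exists2 p, poly_over p & y = p.[x].

Lemma adjoin_subring x : is_subring (adjoin x).
Proof.
split.
- exists 1; last by rewrite hornerC.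
  by move=> i; rewrite coefC; case: (i == 0)%N; [apply: subring1 | apply: subring0].
- move=> _ _ [p Vp ->] [q Vq ->]; exists (p - q); last by rewrite hornerD hornerN.
  by move=> i; rewrite coefB; apply: subringB.
- move=> _ _ [p Vp ->] [q Vq ->]; exists (p * q); last by rewrite hornerM.
  by move=> i; rewrite coefM; apply: subring_sum => j _; apply: subringM.
Qed.

Lemma adjoin_sub x y : V y -> adjoin x y.
Proof.
move=> Vy; exists y%:P; last by rewrite hornerC.
by move=> i; rewrite coefC; case: (i == 0)%N => //; apply: subring0.
Qed.

Lemma adjoin_gen x : adjoin x x.
Proof. by exists 'X; [move=> i; rewrite coefX; apply: subring_bool | rewrite hornerX]. Qed.

Lemma horner_inv_mulXn p t x : poly_over p -> t * x = 1 ->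
  exists r, [/\ poly_over r, (size r <= (size p).+1)%N &
                p.[t] * x ^+ size p = r.[x]].
Proof.
move=> Vp tx; set n := size p.
exists (\sum_(i < n) p`_i *: 'X^(n - i)); split.
- move=> j; rewrite coef_sum; apply: subring_sum => i _.
  by rewrite coefZ coefXn; apply: subringM => //; apply: subring_bool.
- apply/leq_sizeP => j ltnj; rewrite coef_sum big1 // => i _.
  by rewrite coefZ coefXn gtn_eqF ?mulr0 // (leq_ltn_trans (leq_subr _ _) ltnj).
- rewrite horner_coef -/n mulr_suml horner_sum; apply: eq_bigr => i _.
  have -> : x ^+ n = x ^+ i * x ^+ (n - i) by rewrite -exprD subnKC // ltnW.
  by rewrite hornerZ hornerXn mulrA -(mulrA _ (t ^+ i)) -exprMn tx expr1n mulr1.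
Qed.

Lemma integral_over_inv_horner p t x :
  poly_over p -> x * t = 1 -> x = p.[t] -> integral_over V x.
Proof.
move=> Vp xt xE; have tx : t * x = 1 by rewrite mulrC.
have [r [Vr sizer rE]] := horner_inv_mulXn Vp tx.
exists ('X^((size p).+1) - r); split.
- by apply/monicP; rewrite lead_coefDl ?lead_coefXn // size_polyN size_polyXn.
- by move=> i; rewrite coefB coefXn; apply: subringB => //; apply: subring_bool.
- by rewrite /root hornerD hornerN hornerXn exprS {1}xE rE subrr.
Qed.

End Subring.

Lemma inter_subring (T : comNzRingType) (A B : T -> Prop) :
  is_subring A -> is_subring B -> is_subring (inter A B).
Proof.
move=> subA subB; split; first by split; apply: subring1.
- by move=> x y [Ax Bx] [Ay By]; split; apply: subringB.
- by move=> x y [Ax Bx] [Ay By]; split; apply: subringM.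
Qed.

Section MaximalSubring.
Variables (T : comNzRingType) (V : T -> Prop).
Hypothesis maxV : maximal_subring_of V (fun _ => True).

Let subV : is_subring V. Proof. by case: maxV => [[]]. Qed.

Lemma maximal_adjoin_full x : ~ V x -> forall y, adjoin V x y.
Proof.
case: maxV => _ _ maximal nVx y; apply: NNPP => nadj_y; apply: nVx.
apply: (maximal (adjoin V x)); last exact: adjoin_gen.
- by split; [apply: adjoin_subring | ].
- by exists y.
- by move=> z; apply: adjoin_sub.
Qed.

Lemma maximal_mul_invX s t z : ~ V s -> V t -> s * t = 1 ->
  exists n, V (z * t ^+ n).
Proof.
move=> nVs Vt st; have [p Vp ->] := maximal_adjoin_full nVs z.
have [r [Vr _ rE]] := horner_inv_mulXn subV Vp st.
by exists (size p); rewrite rE; apply: subring_horner.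
Qed.

Hypothesis icV : integrally_closed_in_T V.

Lemma maximal_inv_mem x y : x * y = 1 -> ~ V y -> V x.
Proof.
move=> xy nVy; have [p Vp xE] := maximal_adjoin_full nVy x.
exact/icV/(integral_over_inv_horner subV Vp xy xE).
Qed.

End MaximalSubring.

Section ValuationDomain.
Variables (T : comNzRingType) (A : T -> Prop).
Hypothesis subA : is_subring A.

Lemma prime_ideal_expr Q r n : prime_ideal_of A Q -> A r -> Q (r ^+ n) -> Q r.
Proof.
move=> [_ [nQ1 Qprime]] Ar; elim: n => [|n IHn]; first by rewrite expr0 => /nQ1.
by rewrite exprS => /(Qprime _ _ Ar (subringX subA _ Ar)) [|/IHn].
Qed.

Lemma prime_ideal0 :
  (forall a b, A a -> A b -> a * b = 0 -> a = 0 \/ b = 0) ->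
  prime_ideal_of A (fun x => x = 0).
Proof.
move=> domA; split; split => //.
- by move=> x ->; apply: subring0.
- by move=> x y -> ->; rewrite addr0.
- by move=> a x _ ->; rewrite mulr0.
- exact/eqP/oner_neq0.
Qed.

Definition nonunits : T -> Prop :=
  fun x => A x /\ ~ exists2 u, A u & x * u = 1.

Lemma prime_ideal_nonunits : valuation_domain A -> prime_ideal_of A nonunits.
Proof.
move=> [_ totA]; split; split.
- by move=> x [].
- split; first exact: subring0.
  by case=> u _ /esym/eqP; rewrite mul0r oner_eq0.
- move=> x y [Ax nux] [Ay nuy]; split; first exact: subringD.
  have A1D c : A c -> A (1 + c) by move=> Ac; apply: subringD => //; apply: subring1.
  have [[c Ac ->] | [c Ac ->]] := totA x y Ax Ay => -[u Au].
  + rewrite -{1}[x]mulr1 -mulrDr -mulrA => xu; apply: nux.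
    by exists ((1 + c) * u) => //; apply: subringM => //; apply: A1D.
  + rewrite -{2}[y]mulr1 -mulrDr addrC -mulrA => yu; apply: nuy.
    by exists ((1 + c) * u) => //; apply: subringM => //; apply: A1D.
- move=> a x Aa [Ax nux]; split; first exact: subringM.
  case=> u Au axu; apply: nux; exists (a * u); first exact: subringM.
  by rewrite mulrCA mulrA.
- by case=> _ []; exists 1; [apply: subring1 | rewrite mulr1].
- move=> x y Ax Ay [_ nuxy].
  have [[u Au xu] | ] := classic (exists2 u, A u & x * u = 1); last by left.
  have [[v Av yv] | ] := classic (exists2 v, A v & y * v = 1); last by right.
  by case: nuxy; exists (u * v); [apply: subringM | rewrite mulrACA xu yv mulr1].
Qed.

Lemma valuation_domain_in_subfield (K : T -> Prop) :
  is_subfield K -> (forall x, A x -> K x) ->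
  (forall x y, K x -> K y -> x * y = 1 -> A x \/ A y) ->
  valuation_domain A.
Proof.
move=> [subK invK] AK invA; split.
  move=> a b /AK Ka _ ab0; have [-> | a0] := eqVneq a 0; [by left | right].
  have [a' _ aa'] := invK a Ka a0.
  by rewrite -[b]mul1r -aa' mulrAC ab0 mul0r.
move=> a b Aa Ab; have [-> | a0] := eqVneq a 0.
  by right; exists 0; [apply: subring0 | rewrite mulr0].
have [a' Ka' aa'] := invK a (AK a Aa) a0.
have bE : b = a * (a' * b) by rewrite mulrA aa' mul1r.
have Kc : K (a' * b) by apply: subringM subK _ _ Ka' (AK b Ab).
have [c0 | nc0] := eqVneq (a' * b) 0.
  by left; exists 0; [apply: subring0 | rewrite {1}bE c0].
have [d Kd cd] := invK _ Kc nc0.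
have [Ac | Ad] := invA _ _ Kc Kd cd; first by left; exists (a' * b).
by right; exists d; rewrite // {1}bE -mulrA cd mulr1.
Qed.

End ValuationDomain.

Section Contraction.
Variables (T : comNzRingType) (K V : T -> Prop).
Hypotheses (subfK : is_subfield K) (maxV : maximal_subring_of V (fun _ => True)).
Hypothesis icV : integrally_closed_in_T V.
Local Notation W := (inter V K).

Let subK : is_subring K. Proof. by case: subfK. Qed.
Let subV : is_subring V. Proof. by case: maxV => [[]]. Qed.
Let subW : is_subring W. Proof. exact: inter_subring. Qed.

Lemma contraction_valuation_domain : valuation_domain W.
Proof.
apply: (valuation_domain_in_subfield subW subfK) => [x [] // | x y Kx Ky xy].
have [Vy | nVy] := classic (V y); [by right | left; split => //].
exact: maximal_inv_mem maxV icV _ _ xy nVy.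
Qed.

Lemma contraction_mul_invX s t z : K z -> K t -> ~ V s -> V t -> s * t = 1 ->
  exists n, W (z * t ^+ n).
Proof.
move=> Kz Kt nVs Vt st; have [n Vzt] := maximal_mul_invX maxV z nVs Vt st.
by exists n; split => //; apply: subringM => //; apply: subringX.
Qed.

Variable k : T.
Hypotheses (Kk : K k) (nVk : ~ V k).

Lemma contraction_maximal : maximal_subring_of W K.
Proof.
split; first by split=> // x [].
  by exists k; split => // -[].
move=> S [subS SK] [z [Kz nSz]] WS s Ss; apply: NNPP => nWs; apply: nSz.
have Ks := SK s Ss.
have nVs : ~ V s by move=> Vs; apply: nWs.
have s0 : s != 0 by apply/eqP => s0; apply: nVs; rewrite s0; apply: subring0.
have [t Kt st] := subfK.2 s Ks s0.
have Vt : V t by apply: maximal_inv_mem maxV icV _ _ _ nVs; rewrite mulrC.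
have [n Wzt] := contraction_mul_invX Kz Kt nVs Vt st.
have -> : z = z * t ^+ n * s ^+ n by rewrite -mulrA -exprMn (mulrC t) st expr1n mulr1.
by apply: subringM subS _ _ (WS _ Wzt) (subringX subS _ Ss).
Qed.

Lemma contraction_prime_chain2 :
  exists P Q, [/\ prime_ideal_of W P, prime_ideal_of W Q & strict_sub P Q].
Proof.
have k0 : k != 0 by apply/eqP => k0; apply: nVk; rewrite k0; apply: subring0.
have [t Kt kt] := subfK.2 k Kk k0.
have Vt : V t by apply: maximal_inv_mem maxV icV _ _ _ nVk; rewrite mulrC.
have [domW _] := contraction_valuation_domain.
have primeM := prime_ideal_nonunits subW contraction_valuation_domain.
exists (fun x => x = 0), (nonunits W); split => //; first exact: prime_ideal0.
split; first by case: primeM => -[_ M0 _ _] _ x ->.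
exists t; split; last by move=> t0; move: kt; rewrite t0 mulr0 => /esym/eqP; rewrite oner_eq0.
split; first by split.
case=> u [Vu Ku] tu; apply: nVk; suff <- : u = k by [].
by rewrite -[u]mul1r -kt -mulrA tu mulr1.
Qed.

Lemma contraction_no_prime_chain3 :
  ~ exists P Q R, [/\ prime_ideal_of W P, prime_ideal_of W Q, prime_ideal_of W R,
                      strict_sub P Q & strict_sub Q R].
Proof.
case=> P [Q [R [[[_ P0 _ _] _] primeQ [[RW _ _ RM] [nR1 _]] [_ [x [Qx nPx]]]
                [_ [y [Ry nQy]]]]]].
apply: nQy; have [[QW Q0 _ QM] _] := primeQ.
have [[_ Kx] [Vy Ky]] := (QW x Qx, RW y Ry).
have [-> | y0] := eqVneq y 0; first exact: Q0.
have x0 : x != 0 by apply/eqP => x0; apply: nPx; rewrite x0.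
have [y' Ky' yy'] := subfK.2 y Ky y0.
have [x' Kx' xx'] := subfK.2 x Kx x0.
have nVy' : ~ V y' by move=> Vy'; apply: nR1; rewrite -yy' mulrC; apply: RM.
have [n Wx'y] := contraction_mul_invX Kx' Ky nVy' Vy (etrans (mulrC _ _) yy').
apply: (prime_ideal_expr subW (n := n) primeQ) => //.
have -> : y ^+ n = x' * y ^+ n * x by rewrite mulrAC (mulrC x') xx' mul1r.
exact: QM.
Qed.

End Contraction.

Theorem lemma3p2 (T : comNzRingType) (K V : T -> Prop) :
  is_subfield K ->
  maximal_subring_of V (fun _ => True) ->
  integrally_closed_in_T V ->
  ~ (forall x, K x -> V x) ->
  maximal_subring_of (inter V K) K /\
  valuation_domain (inter V K) /\ krull_dim_one (inter V K).
Proof.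
move=> subfK maxV icV nKV.
have [k [Kk nVk]] : exists k, K k /\ ~ V k.
  by apply: NNPP => nk; apply: nKV => x Kx; apply: NNPP => nVx; apply: nk; exists x.
split; first exact: (contraction_maximal subfK maxV icV Kk nVk).
split; first exact: (contraction_valuation_domain subfK maxV icV).
split; first exact: (contraction_prime_chain2 subfK maxV icV Kk nVk).
exact: (contraction_no_prime_chain3 subfK maxV).
Qed.
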